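(* Let $n_1,n_2,n_3\ge2$, $b>0$, $0<\zeta<b$, $r\le\min\{n_1,n_2\}$, $n_2n_3<s\le rn_2n_3$, $1\le m\le n_1n_2n_3$, $\Omega\sim\mathrm{Bern}(\frac{m}{n_1n_2n_3})$, and let $\mathcal{Y}_{ijk}\sim\mathrm{Poisson}(\mathcal{X}^*_{ijk})$ independently for $(i,j,k)\in\Omega$. Then there exist $0<\widetilde{\beta}_c<1$ and $\widetilde{C}>0$ such that \[ \inf_{\widetilde{\mathcal{X}}}\sup_{\mathcal{X}^*\in\widetilde{\mathfrak{U}}(r,b,s,\zeta)}\frac{\mathbb{E}_{\Omega,\mathcal{Y}_\Omega}\|\widetilde{\mathcal{X}}-\mathcal{X}^*\|_F^2}{n_1n_2n_3}\ge\widetilde{C}\min\left\{\widetilde{\Delta}b^2,\ \widetilde{\beta}_c^2\zeta\left(\frac{s-n_2n_3+rn_1n_3}{m}\right)\right\}, \] where $\varsigma=\zeta/b$, $\Delta_1=\min\{1,\frac{s-n_2n_3}{n_2n_3}\}$, $\widetilde{\Delta}=\min\{(1-\varsigma)^2,\Delta_1\}$, and the infimum is over all estimators.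
   Context: Tensor-tensor product $\diamond$: for $\mathcal{X}\in\mathbb{R}^{n_1\times n_2\times n_3}$ with frontal slices $\mathbf{X}^{(1)},\dots,\mathbf{X}^{(n_3)}$ and $\mathcal{Y}\in\mathbb{R}^{n_2\times n_4\times n_3}$, $\mathcal{X}\diamond\mathcal{Y}$ is obtained by multiplying the block-circulant matrix with $(p,q)$ block $\mathbf{X}^{((p-q)\bmod n_3+1)}$ by the vertical stack of the frontal slices of $\mathcal{Y}$ and folding back. $\Omega\sim\mathrm{Bern}(\gamma)$: each index included independently with probability $\gamma$. $\widetilde{\mathfrak{U}}(r,b,s,\zeta)=\{\mathcal{X}=\mathcal{A}\diamond\mathcal{B}\in\mathbb{R}_+^{n_1\times n_2\times n_3}:\mathcal{X}_{ijk}\ge\zeta\ \forall i,j,k,\ \mathcal{A}\in\mathbb{R}_+^{n_1\times r\times n_3},0\le\mathcal{A}_{ijk}\le1,\ \mathcal{B}\in\mathbb{R}_+^{r\times n_2\times n_3},0\le\mathcal{B}_{ijk}\le b,\ \|\mathcal{B}\|_0\le s\}$, with $\|\cdot\|_0$ the number of nonzero entries. *)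

From HB Require Import structures.
From mathcomp Require Import all_boot all_order all_algebra.
From mathcomp Require Import all_classical all_reals all_analysis.
Set Implicit Arguments. Unset Strict Implicit. Unset Printing Implicit Defensive.
Import Order.TTheory GRing.Theory Num.Theory.
Local Open Scope ring_scope.
Local Open Scope classical_set_scope.

Section Defs.
Variable R : realType.

Definition tensor (n1 n2 n3 : nat) := 'I_n1 -> 'I_n2 -> 'I_n3 -> R.

Definition idx (n1 n2 n3 : nat) := ('I_n1 * 'I_n2 * 'I_n3)%type.

Definition ord_csub (n : nat) (k q : 'I_n) : 'I_n :=
  Ordinal (ltn_pmod (k + n - q) (leq_ltn_trans (leq0n k) (ltn_ord k))).

(* Tensor-tensor product: frontal slice k of A <> B is
   sum_q A^{((k - q) mod n3)} * B^{(q)} (0-indexed form of the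
   block-circulant definition). *)
Definition tprod (n1 r n2 n3 : nat) (A : tensor n1 r n3) (B : tensor r n2 n3)
  : tensor n1 n2 n3 :=
  fun i j k => \sum_(l < r) \sum_(q < n3)
     A i l (ord_csub k q) * B l j q.

Definition nnz (n1 n2 n3 : nat) (B : tensor n1 n2 n3) : nat :=
  #|[set t : idx n1 n2 n3 | B t.1.1 t.1.2 t.2 != 0]|.

Definition Uset (n1 n2 n3 r : nat) (b : R) (s : nat) (zeta : R)
  : set (tensor n1 n2 n3) :=
  [set X | (forall i j k, zeta <= X i j k) /\
     exists (A : tensor n1 r n3) (B : tensor r n2 n3),
       X = tprod A B /\
       (forall i j k, 0 <= A i j k <= 1) /\
       (forall i j k, 0 <= B i j k <= b) /\
       (nnz B <= s)%N].

Definition frob2_dist (n1 n2 n3 : nat) (X Y : tensor n1 n2 n3) : R :=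
  \sum_(t : idx n1 n2 n3) (X t.1.1 t.1.2 t.2 - Y t.1.1 t.1.2 t.2) ^+ 2.

Definition bern_prob (n1 n2 n3 : nat) (gamma : R) (Om : {set idx n1 n2 n3}) : R :=
  gamma ^+ #|Om| * (1 - gamma) ^+ (#|[set: idx n1 n2 n3]| - #|Om|).

Definition poisson_pmf (lambda : R) (y : nat) : R :=
  expR (- lambda) * lambda ^+ y / (y`!)%:R.

(* An estimator sees the sampled set Omega and the counts Y_Omega,
   encoded as a nat-valued tensor vanishing outside Omega. *)
Definition estimator (n1 n2 n3 : nat) :=
  {set idx n1 n2 n3} -> {ffun idx n1 n2 n3 -> nat} -> tensor n1 n2 n3.

Definition obs_set (n1 n2 n3 : nat) (Om : {set idx n1 n2 n3})
  : set {ffun idx n1 n2 n3 -> nat} :=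
  [set Y | forall t, t \notin Om -> Y t = 0%N].

Definition risk (n1 n2 n3 : nat) (gamma : R) (est : estimator n1 n2 n3)
    (X : tensor n1 n2 n3) : \bar R :=
  (\sum_(Om : {set idx n1 n2 n3})
     (bern_prob gamma Om)%:E *
     \esum_(Y in obs_set Om)
        ((\prod_(t in Om) poisson_pmf (X t.1.1 t.1.2 t.2) (Y t)) *
         frob2_dist (est Om Y) X)%:E)%E.

Definition minimax_risk (n1 n2 n3 r : nat) (b : R) (s m : nat) (zeta : R) : \bar R :=
  let gamma : R := m%:R / (n1 * n2 * n3)%N%:R in
  ereal_inf [set ereal_sup [set (risk gamma est X * ((n1 * n2 * n3)%N%:R^-1)%:E)%E
                            | X in @Uset n1 n2 n3 r b s zeta]
            | est in [set: estimator n1 n2 n3]].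

End Defs.

Arguments Uset {R} n1 n2 n3 r b s zeta _.
Arguments minimax_risk {R} n1 n2 n3 r b s m zeta.

From Pilot Require Import Defs.
From HB Require Import structures.
From mathcomp Require Import all_boot all_order all_algebra.
From mathcomp Require Import all_classical all_reals all_analysis.
From mathcomp Require Import ring lra zify.
Import Order.TTheory GRing.Theory Num.Theory.
Set Implicit Arguments. Unset Strict Implicit. Unset Printing Implicit Defensive.
Local Open Scope ring_scope.

(* Assouad's method on a hypercube of tensors.  Split the index set into blocks
   and let X_w = zeta + delta [w(block of t)] for w ranging over 0/1 vectors on
   blocks.  Grouping the second index modulo r (a rank-r factorisation with n2
   nonzeros in B) or the first index modulo g = s / (n2 n3) (with g n2 n3 <= s
   nonzeros) puts every X_w in U~(r, b, s, zeta).  When gamma |block| delta^2 <= zeta,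
   the sampled Poisson experiments of two tensors differing in one block have
   Bhattacharyya affinity at least 3/4, so by Le Cam the two risks of any
   estimator at an entry of that block add up to at least delta^2/4; averaging
   over the cube gives a per-entry risk of delta^2/8.  Taking delta^2 as large as
   allowed, min((b - zeta)^2, zeta N / (m |block|)), gives the bound.  The
   infinite sums over counts are truncated at a level K: this only lowers the
   risk and costs an arbitrarily small amount of affinity. *)

(* [Defs.poisson_pmf] is always qualified: MathComp-Analysis exports another
   [poisson_pmf]. *)

Section PoissonAffinity.
Variable R : realType.
Implicit Types (x zeta eta : R) (K : nat).

Lemma series_exp_coeff_le_expR x K : 0 <= x -> series (exp_coeff x) K <= expR x.
Proof.
move=> x0; apply: nondecreasing_cvgn_le; last exact: is_cvg_series_exp_coeff.
by apply: nondecreasing_series => n _ _; exact: exp_coeff_ge0.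
Qed.

Lemma series_exp_coeff_near_expR x eta : 0 < eta ->
  exists K0, forall K, (K0 <= K)%N -> expR x - eta <= series (exp_coeff x) K.
Proof.
move=> eta0; have /cvgrPdist_lt/(_ _ eta0)[K0 _ near] := is_cvg_series_exp_coeff x.
exists K0 => K /near /ltW; rewrite ler_norml => /andP[_]; rewrite /expR; lra.
Qed.

Lemma poisson_pmf_ge0 (l : R) y : 0 <= l -> 0 <= Defs.poisson_pmf l y.
Proof. by move=> l0; rewrite /Defs.poisson_pmf !mulr_ge0 ?invr_ge0 ?exprn_ge0 ?expR_ge0. Qed.

Lemma sum_poisson_pmf_le1 (l : R) K : 0 <= l -> \sum_(y < K) Defs.poisson_pmf l y <= 1.
Proof.
move=> l0; rewrite (eq_bigr (fun y : 'I_K => expR (- l) * exp_coeff l y)); last first.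
  by move=> y _; rewrite /Defs.poisson_pmf /exp_coeff /= mulrA.
rewrite -mulr_sumr -(mulVf (lt0r_neq0 (expR_gt0 l))) -expRN.
apply: ler_wpM2l; first exact: expR_ge0.
by rewrite -(big_mkord xpredT (exp_coeff l)) series_exp_coeff_le_expR.
Qed.

Definition poisson_affinity (l l' : R) (y : nat) : R :=
  expR (- ((l + l') / 2)) * (Num.sqrt l * Num.sqrt l') ^+ y / (y`!)%:R.

Lemma poisson_affinity_ge0 (l l' : R) y : 0 <= poisson_affinity l l' y.
Proof.
by rewrite /poisson_affinity !mulr_ge0 ?invr_ge0 ?exprn_ge0 ?mulr_ge0 ?sqrtr_ge0 ?expR_ge0.
Qed.

Lemma poisson_affinity_sqr (l l' : R) y : 0 <= l -> 0 <= l' ->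
  poisson_affinity l l' y ^+ 2 = Defs.poisson_pmf l y * Defs.poisson_pmf l' y.
Proof.
move=> l0 l'0.
have expR_sqr : expR (- ((l + l') / 2)) ^+ 2 = expR (- l) * expR (- l').
  by rewrite expr2 -!expRD; congr expR; lra.
have sqrt_sqr : ((Num.sqrt l * Num.sqrt l') ^+ y) ^+ 2 = l ^+ y * l' ^+ y.
  by rewrite -exprM mulnC exprM [(_ * _) ^+ 2]exprMn !sqr_sqrtr // exprMn.
have fact_neq0 : (y`!)%:R != 0 :> R by rewrite pnatr_eq0 -lt0n fact_gt0.
rewrite /poisson_affinity /Defs.poisson_pmf.
set c := expR _; set a := (_ * _) ^+ y; set f := (y`!)%:R.
transitivity (c ^+ 2 * a ^+ 2 / f ^+ 2); first by field.
by rewrite expR_sqr sqrt_sqr; field.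
Qed.

Lemma sum_poisson_affinityE (l l' : R) K :
  \sum_(y < K) poisson_affinity l l' y =
  expR (- ((l + l') / 2)) * series (exp_coeff (Num.sqrt l * Num.sqrt l')) K.
Proof.
rewrite /series /= big_mkord mulr_sumr.
by apply: eq_bigr => y _; rewrite /poisson_affinity /exp_coeff /= mulrA.
Qed.

Lemma sqrt_mul_le_mean (l l' : R) : 0 <= l -> 0 <= l' ->
  Num.sqrt l * Num.sqrt l' <= (l + l') / 2.
Proof.
move=> l0 l'0; rewrite -{2}(sqr_sqrtr l0) -{2}(sqr_sqrtr l'0).
by have := sqr_ge0 (Num.sqrt l - Num.sqrt l'); nra.
Qed.

Lemma sum_poisson_affinity_le1 (l l' : R) K : 0 <= l -> 0 <= l' ->
  \sum_(y < K) poisson_affinity l l' y <= 1.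
Proof.
move=> l0 l'0; rewrite sum_poisson_affinityE.
apply: le_trans (_ : expR (- ((l + l') / 2)) * expR (Num.sqrt l * Num.sqrt l') <= 1).
  by rewrite ler_wpM2l ?expR_ge0 ?series_exp_coeff_le_expR ?mulr_ge0 ?sqrtr_ge0.
by rewrite -expRD expR_le1; have := sqrt_mul_le_mean l0 l'0; lra.
Qed.

Lemma sum_poisson_affinity_ge (l l' : R) K zeta eta :
  0 < zeta -> zeta <= l -> zeta <= l' -> 0 <= eta ->
  expR (Num.sqrt l * Num.sqrt l') - eta <=
    series (exp_coeff (Num.sqrt l * Num.sqrt l')) K ->
  1 - (l - l') ^+ 2 / (8 * zeta) - eta <= \sum_(y < K) poisson_affinity l l' y.
Proof.
move=> zeta0 zl zl' eta0 trunc_ok; rewrite sum_poisson_affinityE.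
have l0 : 0 <= l by lra.
have l'0 : 0 <= l' by lra.
set u := Num.sqrt l; set v := Num.sqrt l'.
have u0 : 0 <= u := sqrtr_ge0 l; have v0 : 0 <= v := sqrtr_ge0 l'.
have hu : u ^+ 2 = l := sqr_sqrtr l0; have hv : v ^+ 2 = l' := sqr_sqrtr l'0.
set c := expR (- ((l + l') / 2)).
have c0 : 0 <= c := expR_ge0 _.
have c1 : c <= 1 by rewrite /c expR_le1; lra.
have cK : c * (expR (u * v) - eta) <= c * series (exp_coeff (u * v)) K.
  exact: ler_wpM2l.
have cexp : c * expR (u * v) = expR (u * v - (l + l') / 2) by rewrite /c -expRD addrC.
have exp_ge := expR_ge1Dx (u * v - (l + l') / 2).
(* (l + l')/2 - uv = (u - v)^2 / 2 = (l - l')^2 / (2 (u + v)^2) and (u + v)^2 >= 4 zeta. *)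
have gap : (l + l') / 2 - u * v <= (l - l') ^+ 2 / (8 * zeta).
  have uv : zeta <= u * v.
    have : zeta ^+ 2 <= (u * v) ^+ 2 by rewrite exprMn hu hv; nra.
    by rewrite ler_sqr ?nnegrE ?mulr_ge0 //; lra.
  rewrite ler_pdivlMr; last lra.
  rewrite -hu -hv (_ : (u ^+ 2 - v ^+ 2) ^+ 2 = (u - v) ^+ 2 * (u + v) ^+ 2); last by ring.
  by have := sqr_ge0 (u - v); nra.
by nra.
Qed.

End PoissonAffinity.

Section FiniteSums.
Variable R : realType.

Lemma one_sub_sum_le_prod (I : finType) (x : I -> R) :
  (forall i, 0 <= x i <= 1) -> 1 - \sum_i (1 - x i) <= \prod_i x i.
Proof.
move=> x01; rewrite /index_enum; elim: (Finite.enum I) => [|a r IH].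
  by rewrite !big_nil subr0.
rewrite !big_cons.
have sum_ge0 : 0 <= \sum_(j <- r) (1 - x j).
  by apply: sumr_ge0 => i _; have := x01 i; lra.
have prod_ge0 : 0 <= \prod_(j <- r) x j.
  by apply: prodr_ge0 => i _; have := x01 i; lra.
by have := x01 a; nra.
Qed.

Lemma sum_set_ffun_prod (I J : finType) (psi : I -> bool -> J -> R) :
  \sum_(Om : {set I}) \sum_(f : {ffun I -> J}) \prod_t psi t (t \in Om) (f t)
  = \prod_t (\sum_j psi t true j + \sum_j psi t false j).
Proof.
rewrite bigA_distr; apply: eq_bigr => Om _.
transitivity (\prod_t \sum_j psi t (t \in Om) j); first by rewrite bigA_distr_bigA.
by apply: eq_bigr => t _; case: (t \in Om).
Qed.

Lemma sum_ord_mul_eq0 (K : nat) (c : R) : \sum_(y < K.+1) c * ((y : nat) == 0%N)%:R = c.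
Proof. by rewrite big_ord_recl mulr1 big1 ?addr0 // => i _; rewrite mulr0. Qed.

Lemma exists_ge_average (T : finType) (F : T -> R) (c : R) (x0 : T) :
  #|T|%:R * c <= \sum_x F x -> exists x, c <= F x.
Proof.
move=> avg; have [xm _ xm_max] := @arg_maxP _ R T x0 xpredT F isT.
exists xm; have card_gt0 : 0 < #|T|%:R :> R by rewrite ltr0n; apply/card_gt0P; exists x0.
rewrite -(ler_pM2l card_gt0); apply: le_trans avg _.
by rewrite mulr_natl -sumr_const; apply: ler_sum => x _; exact: xm_max.
Qed.

Lemma two_point_lower_bound (p q a x x' z d : R) : 0 <= p -> 0 <= q -> 0 <= a ->
  a ^+ 2 = p * q -> (x - x') ^+ 2 = d ^+ 2 ->
  d ^+ 2 * (a - (p + q) / 4) <= p * (z - x) ^+ 2 + q * (z - x') ^+ 2.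
Proof.
move=> p0 q0 a0 apq xx'.
have [pq0|pq_neq0] := eqVneq (p + q) 0.
  have p_0 : p = 0 by lra.
  have q_0 : q = 0 by lra.
  have a_0 : a = 0 by apply/eqP; rewrite -sqrf_eq0 apq p_0 mul0r.
  by rewrite p_0 q_0 a_0; lra.
have pq_gt0 : 0 < p + q by rewrite lt_neqAle eq_sym pq_neq0 addr_ge0.
(* Lagrange: (p + q) (p u^2 + q v^2) = (p u + q v)^2 + p q (u - v)^2. *)
have lagrange : (p + q) * (p * (z - x) ^+ 2 + q * (z - x') ^+ 2) =
                (p * (z - x) + q * (z - x')) ^+ 2 + p * q * d ^+ 2.
  by rewrite -xx'; ring.
have risk_ge : a ^+ 2 * d ^+ 2 <= (p + q) * (p * (z - x) ^+ 2 + q * (z - x') ^+ 2).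
  by rewrite lagrange apq; have := sqr_ge0 (p * (z - x) + q * (z - x')); lra.
have amgm : d ^+ 2 * (a - (p + q) / 4) * (p + q) <= a ^+ 2 * d ^+ 2.
  by have := sqr_ge0 (a - (p + q) / 2); have := sqr_ge0 d; nra.
by rewrite -(ler_pM2r pq_gt0); rewrite mulrC in risk_ge; lra.
Qed.

Lemma sum_inj_le_esum (A : finType) (P : pred A) (T : choiceType) (S : set T)
    (g : A -> T) (F : T -> R) :
  {in P &, injective g} -> (forall a, P a -> S (g a)) ->
  ((\sum_(a | P a) F (g a))%:E <= \esum_(Y in S) (F Y)%:E)%E.
Proof.
move=> g_inj gS; apply: esum_ge.
exists [set` [seq g a | a <- enum P]]%classic.
  split; first exact: finite_seq.
  by move=> Y /= /mapP [a]; rewrite mem_enum => Pa ->; exact: gS.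
rewrite -fsbig_seq; last first.
  by rewrite map_inj_in_uniq ?enum_uniq // => a a'; rewrite !mem_enum; exact: g_inj.
by rewrite big_map sumEFin big_enum_cond lee_fin (eq_bigl P) // => a; rewrite andbT.
Qed.

End FiniteSums.

Section TruncatedRisk.
Variables (R : realType) (n1 n2 n3 : nat) (gamma : R) (K : nat).
Hypotheses (gamma_ge0 : 0 <= gamma) (gamma_le1 : gamma <= 1).
Local Notation I := (idx n1 n2 n3).
Local Notation T := (tensor R n1 n2 n3).
Local Notation counts := {ffun I -> 'I_K.+1}.

Definition entry (X : T) (t : I) : R := X t.1.1 t.1.2 t.2.

Definition cell_pmf (X : T) (t : I) (sampled : bool) (y : nat) : R :=
  if sampled then gamma * Defs.poisson_pmf (entry X t) y
  else (1 - gamma) * (y == 0%N)%:R.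

(* Joint law of (Omega, Y), restricted to counts at most K: a finite sub-probability. *)
Definition trunc_pmf (X : T) (Om : {set I}) (f : counts) : R :=
  \prod_t cell_pmf X t (t \in Om) (f t).

Definition obs_of (Om : {set I}) (f : counts) : {ffun I -> nat} :=
  [ffun t => if t \in Om then (f t : nat) else 0%N].

Definition trunc_risk (est : estimator R n1 n2 n3) (X : T) : R :=
  \sum_(Om : {set I}) \sum_(f : counts)
    trunc_pmf X Om f * frob2_dist (est Om (obs_of Om f)) X.

Definition entry_risk (est : estimator R n1 n2 n3) (X : T) (t : I) : R :=
  \sum_(Om : {set I}) \sum_(f : counts)
    trunc_pmf X Om f * (entry (est Om (obs_of Om f)) t - entry X t) ^+ 2.

Lemma trunc_riskE est X : trunc_risk est X = \sum_t entry_risk est X t.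
Proof.
rewrite /trunc_risk /entry_risk.
under eq_bigr => Om _ do under eq_bigr => f _ do rewrite /frob2_dist mulr_sumr.
by under eq_bigr => Om _ do rewrite exchange_big; rewrite exchange_big.
Qed.

Lemma trunc_pmf_ge0 X Om f : (forall t, 0 <= entry X t) -> 0 <= trunc_pmf X Om f.
Proof.
move=> X_ge0; apply: prodr_ge0 => t _; rewrite /cell_pmf.
by case: (t \in Om); rewrite mulr_ge0 ?subr_ge0 ?ler0n ?poisson_pmf_ge0.
Qed.

Lemma sum_trunc_pmf_le1 X : (forall t, 0 <= entry X t) ->
  \sum_(Om : {set I}) \sum_(f : counts) trunc_pmf X Om f <= 1.
Proof.
move=> X_ge0; rewrite /trunc_pmf.
rewrite (sum_set_ffun_prod (fun t b (y : 'I_K.+1) => cell_pmf X t b y)).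
apply: prodr_ile1 => t _.
rewrite /cell_pmf sum_ord_mul_eq0 -mulr_sumr; set S := (X in gamma * X).
have S_ge0 : 0 <= S by apply: sumr_ge0 => y _; exact: poisson_pmf_ge0.
have S_le1 : S <= 1 by exact: sum_poisson_pmf_le1.
have g0 := gamma_ge0; have g1 := gamma_le1.
by apply/andP; split; nra.
Qed.

Lemma bern_probE (Om : {set I}) :
  bern_prob gamma Om = \prod_t (if t \in Om then gamma else 1 - gamma).
Proof.
rewrite (bigID (mem Om)) /= (eq_bigr (fun=> gamma)); last by move=> t ->.
rewrite [X in _ * X](eq_bigr (fun=> 1 - gamma)); last by move=> t /negbTE ->.
rewrite !prodr_const /bern_prob.
have -> : #|[set: I]%classic| = #|{: I}|.
  by rewrite (eq_cardT (fun x => in_setT x)) cardT.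
by rewrite -(cardC Om) addKn; congr (_ * _ ^+ _); apply: eq_card => x; rewrite !inE.
Qed.

Definition vanishes_off (Om : {set I}) (f : counts) : bool :=
  [forall t, (t \notin Om) ==> ((f t : nat) == 0%N)].

Lemma trunc_pmfE X Om f : trunc_pmf X Om f = bern_prob gamma Om *
  (if vanishes_off Om f then \prod_(t in Om) Defs.poisson_pmf (entry X t) (obs_of Om f t)
   else 0).
Proof.
rewrite bern_probE /trunc_pmf; case: ifPn => [/forallP f_off|].
  rewrite [X in _ * X]big_mkcond -big_split /=; apply: eq_bigr => t _.
  rewrite /cell_pmf /obs_of ffunE; case: ifPn => // tOm.
  by have /implyP/(_ tOm)/eqP -> := f_off t; rewrite mulr1.
move=> /forallPn[t]; rewrite negb_imply => /andP[tOm ft].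
rewrite mulr0 (bigD1 t) //= /cell_pmf (negbTE tOm) (negbTE ft).
by rewrite mulr0 mul0r.
Qed.

Lemma obs_of_inj Om : {in vanishes_off Om &, injective (obs_of Om)}.
Proof.
move=> f f' /forallP f_off /forallP f'_off /ffunP eq_obs; apply/ffunP => t.
apply: ord_inj; have := eq_obs t; rewrite /obs_of !ffunE; case: ifPn => // tOm _.
by move/implyP/(_ tOm)/eqP: (f_off t) => ->; move/implyP/(_ tOm)/eqP: (f'_off t) => ->.
Qed.

Lemma obs_of_obs_set Om f : obs_set Om (obs_of Om f).
Proof. by move=> t tOm; rewrite /obs_of ffunE (negbTE tOm). Qed.

Lemma trunc_risk_le_risk est X : (forall t, 0 <= entry X t) ->
  ((trunc_risk est X)%:E <= risk gamma est X)%E.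
Proof.
move=> X_ge0; rewrite /risk /trunc_risk -sumEFin; apply: lee_sum => Om _.
under eq_bigr do rewrite trunc_pmfE -mulrA.
rewrite -mulr_sumr EFinM; apply: lee_wpmul2l.
  rewrite lee_fin bern_probE; apply: prodr_ge0 => t _.
  by have := gamma_ge0; have := gamma_le1; case: ifP; lra.
rewrite (bigID (vanishes_off Om)) /= [X in _ + X]big1 ?addr0; last first.
  by move=> f /negbTE ->; rewrite mul0r.
under eq_bigr => f f_off do rewrite f_off /=.
apply: (sum_inj_le_esum (g := obs_of Om)
  (fun Y => (\prod_(t in Om) Defs.poisson_pmf (entry X t) (Y t)) *
                 frob2_dist (est Om Y) X)).
  exact: obs_of_inj.
by move=> f _; exact: obs_of_obs_set.
Qed.

End TruncatedRisk.

Section TruncatedAffinity.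
Variables (R : realType) (n1 n2 n3 : nat) (gamma : R) (K : nat) (zeta eta : R).
Hypotheses (gamma_ge0 : 0 <= gamma) (gamma_le1 : gamma <= 1).
Hypotheses (zeta_gt0 : 0 < zeta) (eta_ge0 : 0 <= eta).
Local Notation I := (idx n1 n2 n3).
Local Notation T := (tensor R n1 n2 n3).
Local Notation counts := {ffun I -> 'I_K.+1}.
Local Notation entry := (@entry R n1 n2 n3).
Local Notation trunc_pmf := (@trunc_pmf R n1 n2 n3 gamma K).

Definition cell_affinity (X X' : T) (t : I) (sampled : bool) (y : nat) : R :=
  if sampled then gamma * poisson_affinity (entry X t) (entry X' t) y
  else (1 - gamma) * (y == 0%N)%:R.

Definition trunc_affinity (X X' : T) (Om : {set I}) (f : counts) : R :=
  \prod_t cell_affinity X X' t (t \in Om) (f t).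

Lemma trunc_affinity_ge0 X X' Om f : 0 <= trunc_affinity X X' Om f.
Proof.
apply: prodr_ge0 => t _; rewrite /cell_affinity.
by case: (t \in Om); rewrite mulr_ge0 ?subr_ge0 ?ler0n ?poisson_affinity_ge0.
Qed.

Lemma trunc_affinity_sqr X X' Om f :
  (forall t, 0 <= entry X t) -> (forall t, 0 <= entry X' t) ->
  trunc_affinity X X' Om f ^+ 2 = trunc_pmf X Om f * trunc_pmf X' Om f.
Proof.
move=> X_ge0 X'_ge0; rewrite /trunc_affinity /trunc_pmf -prodrXl -big_split /=.
apply: eq_bigr => t _; rewrite /cell_affinity /cell_pmf; case: (t \in Om).
  by rewrite exprMn poisson_affinity_sqr // expr2; ring.
by rewrite exprMn; case: (_ == _); rewrite ?expr2 /=; ring.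
Qed.

Definition indistinguishable (X X' : T) : Prop :=
  [/\ forall t, zeta <= entry X t, forall t, zeta <= entry X' t,
      forall t, let u := Num.sqrt (entry X t) * Num.sqrt (entry X' t) in
        expR u - eta <= series (exp_coeff u) K.+1
    & \sum_t (gamma * ((entry X t - entry X' t) ^+ 2 / (8 * zeta)) + eta) <= 1 / 4].

Lemma sum_trunc_affinity_ge X X' : indistinguishable X X' ->
  3 / 4 <= \sum_(Om : {set I}) \sum_(f : counts) trunc_affinity X X' Om f.
Proof.
move=> [X_ge X'_ge trunc_ok close].
rewrite /trunc_affinity.
rewrite (sum_set_ffun_prod (fun t b (y : 'I_K.+1) => cell_affinity X X' t b y)).
have g0 := gamma_ge0; have g1 := gamma_le1; have e0 := eta_ge0.
set x := fun t => gamma * \sum_(y < K.+1) poisson_affinity (entry X t) (entry X' t) y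
                  + (1 - gamma).
have -> : \prod_t (\sum_(y < K.+1) cell_affinity X X' t true y +
                   \sum_(y < K.+1) cell_affinity X X' t false y) = \prod_t x t.
  by apply: eq_bigr => t _; rewrite /cell_affinity /x sum_ord_mul_eq0 -mulr_sumr.
have S01 t : 0 <= \sum_(y < K.+1) poisson_affinity (entry X t) (entry X' t) y <= 1.
  rewrite sumr_ge0 ?sum_poisson_affinity_le1 //= => [||y _].
  - exact: le_trans (ltW zeta_gt0) (X_ge t).
  - exact: le_trans (ltW zeta_gt0) (X'_ge t).
  - exact: poisson_affinity_ge0.
have x01 t : 0 <= x t <= 1.
  by have /andP[S0 S1] := S01 t; rewrite /x; apply/andP; split; nra.
apply: le_trans (one_sub_sum_le_prod x01).
have x_ge t : 1 - x t <= gamma * ((entry X t - entry X' t) ^+ 2 / (8 * zeta)) + eta.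
  have := sum_poisson_affinity_ge zeta_gt0 (X_ge t) (X'_ge t) eta_ge0 (trunc_ok t).
  by have /andP[S0 S1] := S01 t; rewrite /x; nra.
suff : \sum_t (1 - x t) <=
       \sum_t (gamma * ((entry X t - entry X' t) ^+ 2 / (8 * zeta)) + eta) by lra.
by apply: ler_sum => t _; exact: x_ge.
Qed.

Lemma le_cam_two_point X X' (z : {set I} -> counts -> R) t0 d :
  indistinguishable X X' -> (entry X t0 - entry X' t0) ^+ 2 = d ^+ 2 ->
  d ^+ 2 / 4 <=
    \sum_(Om : {set I}) \sum_(f : counts) trunc_pmf X Om f * (z Om f - entry X t0) ^+ 2 +
    \sum_(Om : {set I}) \sum_(f : counts) trunc_pmf X' Om f * (z Om f - entry X' t0) ^+ 2.
Proof.
move=> close dist_d; have [X_ge X'_ge _ _] := close.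
have X_ge0 t : 0 <= entry X t by apply: le_trans (ltW zeta_gt0) _.
have X'_ge0 t : 0 <= entry X' t by apply: le_trans (ltW zeta_gt0) _.
have mass := sum_trunc_pmf_le1 K gamma_ge0 gamma_le1 X_ge0.
have mass' := sum_trunc_pmf_le1 K gamma_ge0 gamma_le1 X'_ge0.
have affinity := sum_trunc_affinity_ge close.
(* Pointwise two-point bound; summed, the affinity mass >= 3/4 beats both masses <= 1. *)
have pointwise Om f : d ^+ 2 * trunc_affinity X X' Om f <=
    trunc_pmf X Om f * (z Om f - entry X t0) ^+ 2 +
    trunc_pmf X' Om f * (z Om f - entry X' t0) ^+ 2 +
    d ^+ 2 / 4 * trunc_pmf X Om f + d ^+ 2 / 4 * trunc_pmf X' Om f.
  have := two_point_lower_bound (z Om f) (trunc_pmf_ge0 gamma_ge0 gamma_le1 Om f X_ge0)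
    (trunc_pmf_ge0 gamma_ge0 gamma_le1 Om f X'_ge0) (trunc_affinity_ge0 X X' Om f)
    (trunc_affinity_sqr Om f X_ge0 X'_ge0) dist_d.
  lra.
set S := fun F : {set I} -> counts -> R => \sum_(Om : {set I}) \sum_(f : counts) F Om f.
have S_le : S (fun Om f => d ^+ 2 * trunc_affinity X X' Om f) <=
            S (fun Om f => trunc_pmf X Om f * (z Om f - entry X t0) ^+ 2 +
                           trunc_pmf X' Om f * (z Om f - entry X' t0) ^+ 2 +
                           d ^+ 2 / 4 * trunc_pmf X Om f + d ^+ 2 / 4 * trunc_pmf X' Om f).
  by apply: ler_sum => Om _; apply: ler_sum => f _; exact: pointwise.
have S_scale c F : S (fun Om f => c * F Om f) = c * S F.
  by rewrite /S mulr_sumr; apply: eq_bigr => Om _; rewrite mulr_sumr.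
have S_add F G : S (fun Om f => F Om f + G Om f) = S F + S G.
  by rewrite /S -big_split; apply: eq_bigr => Om _; rewrite -big_split.
rewrite !S_add !S_scale in S_le.
by have := sqr_ge0 d; rewrite /S in S_le *; nra.
Qed.

End TruncatedAffinity.

Section Hypercube.
Variables (R : realType) (n1 n2 n3 : nat) (gamma : R) (K : nat) (zeta delta eta : R).
Variables (E : finType) (blk : idx n1 n2 n3 -> E).
Hypotheses (gamma_ge0 : 0 <= gamma) (gamma_le1 : gamma <= 1).
Hypotheses (zeta_gt0 : 0 < zeta) (delta_ge0 : 0 <= delta) (eta_ge0 : 0 <= eta).
Local Notation I := (idx n1 n2 n3).
Local Notation T := (tensor R n1 n2 n3).
Local Notation cube := {ffun E -> bool}.
Local Notation entry := (@entry R n1 n2 n3).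

Definition cube_tensor (w : cube) : T :=
  fun i j k => zeta + delta * (w (blk (i, j, k)))%:R.

Lemma entry_cube_tensor w t : entry (cube_tensor w) t = zeta + delta * (w (blk t))%:R.
Proof. by case: t => [[i j] k]. Qed.

Definition flip_at (e : E) (w : cube) : cube :=
  [ffun e' => if e' == e then ~~ w e' else w e'].

Lemma flip_atK e : involutive (flip_at e).
Proof. by move=> w; apply/ffunP => e'; rewrite !ffunE; case: eqP => // ->; rewrite negbK. Qed.

Lemma entry_cube_tensor_flip e w t :
  (entry (cube_tensor w) t - entry (cube_tensor (flip_at e w)) t) ^+ 2 =
  if blk t == e then delta ^+ 2 else 0.
Proof.
rewrite !entry_cube_tensor ffunE; case: eqP => _; last by rewrite subrr expr0n.
by case: (w (blk t)) => /=; ring.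
Qed.

Hypothesis trunc_ok : forall c c' : bool,
  let u := Num.sqrt (zeta + delta * c%:R) * Num.sqrt (zeta + delta * c'%:R) in
  expR u - eta <= series (exp_coeff u) K.+1.
Hypothesis block_small : forall e, #|[pred t | blk t == e]|%:R * gamma * delta ^+ 2 <= zeta.
Hypothesis eta_small : #|{: I}|%:R * eta <= 1 / 8.

Lemma cube_tensor_ge w t : zeta <= entry (cube_tensor w) t.
Proof. by rewrite entry_cube_tensor lerDl mulr_ge0. Qed.

Lemma cube_tensor_flip_indistinguishable w e :
  indistinguishable gamma K zeta eta (cube_tensor w) (cube_tensor (flip_at e w)).
Proof.
split=> [t|t|t|]; rewrite ?cube_tensor_ge //; first by rewrite !entry_cube_tensor.
rewrite (eq_bigr (fun t =>
    (if blk t == e then gamma * (delta ^+ 2 / (8 * zeta)) else 0) + eta)); last first.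
  by move=> t _; rewrite entry_cube_tensor_flip; case: ifP; rewrite ?mul0r ?mulr0.
rewrite big_split -big_mkcond /= !sumr_const.
rewrite (_ : #|_| = #|[pred t | blk t == e]|); last exact: eq_card.
rewrite (_ : #|_| = #|{: I}|); last exact: eq_card.
rewrite -[_ *+ #|{: I}|]mulr_natl -[_ *+ #|[pred t | blk t == e]|]mulr_natl.
have z0 := zeta_gt0; have := block_small e; have := eta_small.
set c := #|[pred t | blk t == e]|%:R; set N := #|{: I}|%:R => eta_N block_c.
have -> : c * (gamma * (delta ^+ 2 / (8 * zeta))) = c * gamma * delta ^+ 2 / (8 * zeta).
  by rewrite !mulrA.
suff : c * gamma * delta ^+ 2 / (8 * zeta) <= 1 / 8 by lra.
by rewrite ler_pdivrMr; lra.
Qed.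

Lemma entry_risk_flip_ge est w t :
  delta ^+ 2 / 4 <= entry_risk gamma K est (cube_tensor w) t +
                    entry_risk gamma K est (cube_tensor (flip_at (blk t) w)) t.
Proof.
apply: (le_cam_two_point gamma_ge0 gamma_le1 zeta_gt0 eta_ge0
         (fun Om f => entry (est Om (obs_of Om f)) t)).
  exact: cube_tensor_flip_indistinguishable.
by rewrite entry_cube_tensor_flip eqxx.
Qed.

Lemma sum_entry_risk_ge est t :
  #|{: cube}|%:R * (delta ^+ 2 / 8) <= \sum_w entry_risk gamma K est (cube_tensor w) t.
Proof.
(* Pair each vertex w of the cube with its neighbour across the block of t. *)
have flipE : \sum_w entry_risk gamma K est (cube_tensor w) t =
             \sum_w entry_risk gamma K est (cube_tensor (flip_at (blk t) w)) t.
  exact: (reindex_inj (inv_inj (flip_atK (blk t)))).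
have pairs : \sum_(w : cube) delta ^+ 2 / 4 <=
    \sum_w (entry_risk gamma K est (cube_tensor w) t +
            entry_risk gamma K est (cube_tensor (flip_at (blk t) w)) t).
  by apply: ler_sum => w _; exact: entry_risk_flip_ge.
rewrite big_split /= -flipE sumr_const (_ : #|_| = #|{: cube}|) in pairs; last exact: eq_card.
by rewrite -[_ *+ #|{: cube}|]mulr_natl in pairs; have := sqr_ge0 delta; lra.
Qed.

Lemma exists_cube_trunc_risk_ge est :
  exists w, #|{: I}|%:R * (delta ^+ 2 / 8) <= trunc_risk gamma K est (cube_tensor w).
Proof.
apply: (exists_ge_average [ffun=> false]).
under eq_bigr do rewrite trunc_riskE.
rewrite exchange_big /=.
apply: le_trans (_ : \sum_(t : I) #|{: cube}|%:R * (delta ^+ 2 / 8) <= _).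
  rewrite sumr_const (_ : #|_| = #|{: I}|); last exact: eq_card.
  by rewrite mulrCA !mulr_natl.
by apply: ler_sum => t _; exact: sum_entry_risk_ge.
Qed.

End Hypercube.

Lemma exists_trunc_level (R : realType) (I : finType) (u : I -> R) (eta : R) : 0 < eta ->
  exists K0, forall K, (K0 <= K)%N -> forall i, expR (u i) - eta <= series (exp_coeff (u i)) K.
Proof.
move=> eta_gt0.
have [K0 K0_ok] := fin_all_exists (fun i => series_exp_coeff_near_expR (u i) eta_gt0).
exists (\max_i K0 i) => K le_max i; apply: K0_ok.
exact: leq_trans (leq_bigmax i) le_max.
Qed.

Lemma card_idx n1 n2 n3 : #|{: idx n1 n2 n3}| = (n1 * n2 * n3)%N.
Proof. by rewrite !card_prod !card_ord. Qed.

Lemma minimax_risk_ge_cube (R : realType) (n1 n2 n3 r : nat) (b : R) (s m : nat)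
    (zeta delta : R) (E : finType) (blk : idx n1 n2 n3 -> E) :
  (0 < n1 * n2 * n3)%N -> (m <= n1 * n2 * n3)%N -> 0 < zeta -> 0 <= delta ->
  (forall e,
     #|[pred t | blk t == e]|%:R * (m%:R / (n1 * n2 * n3)%N%:R) * delta ^+ 2 <= zeta) ->
  (forall w, Uset n1 n2 n3 r b s zeta (cube_tensor zeta delta blk w)) ->
  ((delta ^+ 2 / 8)%:E <= minimax_risk n1 n2 n3 r b s m zeta)%E.
Proof.
move=> N_gt0 m_le_N zeta_gt0 delta_ge0 block_small cube_in_U.
set N := (n1 * n2 * n3)%N in N_gt0 m_le_N block_small *; set gamma : R := m%:R / N%:R.
have N_gt0' : 0 < N%:R :> R by rewrite ltr0n.
have gamma_ge0 : 0 <= gamma by rewrite divr_ge0.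
have gamma_le1 : gamma <= 1 by rewrite ler_pdivrMr // mul1r ler_nat.
set eta : R := (8 * N%:R)^-1.
have eta_gt0 : 0 < eta by rewrite invr_gt0 mulr_gt0.
have eta_small : #|{: idx n1 n2 n3}|%:R * eta <= 1 / 8.
  by rewrite card_idx -/N /eta invfM mulrCA mulfV ?gt_eqF // mulr1 div1r.
(* Only the means zeta and zeta + delta occur, so one truncation level serves all pairs. *)
have [K0 K0_ok] := exists_trunc_level
  (fun c : bool * bool => Num.sqrt (zeta + delta * c.1%:R) * Num.sqrt (zeta + delta * c.2%:R))
  eta_gt0.
have trunc_ok (c c' : bool) := K0_ok K0.+1 (leqnSn K0) (c, c').
apply/ereal_infP => _ [est _ <-].
have [w risk_w] := exists_cube_trunc_risk_ge gamma_ge0 gamma_le1 zeta_gt0 delta_ge0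
  (ltW eta_gt0) trunc_ok block_small eta_small est.
apply: le_trans (ereal_sup_ubound _); last by exists (cube_tensor zeta delta blk w).
have X_ge0 t : 0 <= entry (cube_tensor zeta delta blk w) t.
  exact: le_trans (ltW zeta_gt0) (cube_tensor_ge _ _ _ _ _).
apply: le_trans (lee_wpmul2r _ (trunc_risk_le_risk K0 gamma_ge0 gamma_le1 est X_ge0));
  last by rewrite lee_fin invr_ge0 ltW.
by rewrite -EFinM lee_fin ler_pdivlMr // mulrC -card_idx.
Qed.

Lemma ord_csub_eq0 n (k q : 'I_n) : (ord_csub k q == 0 :> nat) = (q == k).
Proof.
rewrite /ord_csub /=; have kn := ltn_ord k; have qn := ltn_ord q.
case: (ltngtP q k) => [qk|kq|/val_inj ->]; last by rewrite eqxx addKn modnn.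
- have -> : (k + n - q = (k - q) + n)%N by lia.
  rewrite modnDr modn_small; last lia.
  by rewrite -val_eqE /= (ltn_eqF qk); apply/negbTE/eqP; lia.
- by rewrite -val_eqE /= modn_small ?(gtn_eqF kq); [apply/negbTE/eqP; lia | lia].
Qed.

Lemma ord_csub0 n (k q : 'I_n) : q = 0 :> nat -> ord_csub k q = k.
Proof. by move=> q0; apply: val_inj; rewrite /= q0 subn0 modnDr modn_small. Qed.

Section TprodSelectors.
Variables (R : realType) (n1 r n2 n3 : nat).

Lemma tprod_select_left (sigma : 'I_n1 -> 'I_r) (B : tensor R r n2 n3) :
  tprod (fun i l k => (((k : nat) == 0%N) && (l == sigma i))%:R) B =
  fun i j k => B (sigma i) j k.
Proof.
apply/funext => i; apply/funext => j; apply/funext => k; rewrite /tprod.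
rewrite (bigD1 (sigma i)) //= [X in _ + X]big1 ?addr0; last first.
  by move=> l /negbTE l_neq; apply: big1 => q _; rewrite l_neq andbF mul0r.
rewrite (bigD1 k) //= [X in _ + X]big1 ?addr0; last first.
  by move=> q /negbTE q_neq; rewrite ord_csub_eq0 q_neq mul0r.
by rewrite ord_csub_eq0 !eqxx mul1r.
Qed.

Lemma tprod_select_right (tau : 'I_n2 -> 'I_r) (c : R) (A : tensor R n1 r n3) :
  tprod A (fun l j q => c * (((q : nat) == 0%N) && (l == tau j))%:R) =
  fun i j k => A i (tau j) k * c.
Proof.
apply/funext => i; apply/funext => j; apply/funext => k; rewrite /tprod.
rewrite (bigD1 (tau j)) //= [X in _ + X]big1 ?addr0; last first.
  by move=> l /negbTE l_neq; apply: big1 => q _; rewrite l_neq andbF !mulr0.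
have n3_gt0 : (0 < n3)%N by apply: leq_ltn_trans (ltn_ord k).
rewrite (bigD1 (Ordinal n3_gt0)) //= [X in _ + X]big1 ?addr0; last first.
  move=> q q_neq0; rewrite (_ : (q : nat) == 0%N = false) ?mulr0 //.
  by apply: contraNF q_neq0 => /eqP q0; apply/eqP/val_inj.
by rewrite ord_csub0 // !eqxx mulr1.
Qed.

End TprodSelectors.

Lemma nnz_le_inj (R : realType) n1 n2 n3 (B : tensor R n1 n2 n3) (T : finType)
    (f : idx n1 n2 n3 -> T) :
  {in [pred t | B t.1.1 t.1.2 t.2 != 0] &, injective f} -> (nnz B <= #|T|)%N.
Proof.
move=> f_inj; rewrite /nnz; apply: (leq_card_in f) => t t'.
by rewrite !inE; exact: f_inj.
Qed.

Definition ord_mod (r : nat) (r_gt0 : (0 < r)%N) (j : nat) : 'I_r := Ordinal (ltn_pmod j r_gt0).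

Lemma card_le_div_succ (T : finType) (P : pred T) n r (c : T -> 'I_n) : (0 < r)%N ->
  {in P &, forall t t', c t %/ r = c t' %/ r -> t = t'}%N -> (#|P| <= (n %/ r).+1)%N.
Proof.
move=> r_gt0 c_div_inj; rewrite -[X in (_ <= X)%N]card_ord.
have div_lt t : (c t %/ r < (n %/ r).+1)%N by rewrite ltnS leq_div2r // ltnW.
apply: (leq_card_in (fun t => inord (c t %/ r) : 'I_(n %/ r).+1)) => t t' Pt Pt'.
by move/(congr1 val); rewrite /= !inordK ?div_lt //; exact: c_div_inj.
Qed.

Section Folds.
Variables (n1 n2 n3 : nat).
Local Notation I := (idx n1 n2 n3).

Definition fold_col r (r_gt0 : (0 < r)%N) (t : I) : 'I_n1 * 'I_r * 'I_n3 :=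
  (t.1.1, ord_mod r_gt0 t.1.2, t.2).

Definition fold_row g (g_gt0 : (0 < g)%N) (t : I) : 'I_g * 'I_n2 * 'I_n3 :=
  (ord_mod g_gt0 t.1.1, t.1.2, t.2).

Lemma card_fold_col_fiber r (r_gt0 : (0 < r)%N) e :
  (#|[pred t | fold_col r_gt0 t == e]| <= (n2 %/ r).+1)%N.
Proof.
apply: (card_le_div_succ (c := fun t : I => t.1.2)) => // [[[i j] k] [[i' j'] k']].
rewrite !inE /fold_col => /eqP <- /eqP [-> j_mod ->] /= j_div.
by congr (_, _, _); apply: val_inj; rewrite /= (divn_eq j r) (divn_eq j' r) j_div j_mod.
Qed.

Lemma card_fold_row_fiber g (g_gt0 : (0 < g)%N) e :
  (#|[pred t | fold_row g_gt0 t == e]| <= (n1 %/ g).+1)%N.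
Proof.
apply: (card_le_div_succ (c := fun t : I => t.1.1)) => // [[[i j] k] [[i' j'] k']].
rewrite !inE /fold_row => /eqP <- /eqP [i_mod -> ->] /= i_div.
by congr (_, _, _); apply: val_inj; rewrite /= (divn_eq i g) (divn_eq i' g) i_div i_mod.
Qed.

End Folds.

Section FoldsInUset.
Variables (R : realType) (n1 n2 n3 r s : nat) (b zeta delta : R).
Hypotheses (b_gt0 : 0 < b) (zeta_gt0 : 0 < zeta) (delta_ge0 : 0 <= delta).
Hypothesis zeta_delta_le_b : zeta + delta <= b.

Lemma cube_entry_bounds (c : bool) : zeta <= zeta + delta * c%:R <= b.
Proof.
have z0 := zeta_gt0; have d0 := delta_ge0; have zdb := zeta_delta_le_b.
by case: c; rewrite /= ?mulr1 ?mulr0 ?addr0; apply/andP; split; lra.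
Qed.

Lemma cube_fold_col_in_Uset (r_gt0 : (0 < r)%N) w : (n2 <= s)%N ->
  Uset n1 n2 n3 r b s zeta (cube_tensor zeta delta (@fold_col n1 n2 n3 r r_gt0) w).
Proof.
move=> n2_le_s; split.
  by move=> i j k; case/andP: (cube_entry_bounds (w (fold_col r_gt0 (i, j, k)))).
exists (fun i l k => (zeta + delta * (w (i, l, k))%:R) / b),
       (fun l j q => b * (((q : nat) == 0%N) && (l == ord_mod r_gt0 j))%:R).
split; [|split; [|split]].
- rewrite tprod_select_right; apply/funext => i; apply/funext => j; apply/funext => k.
  by rewrite divfK ?gt_eqF.
- move=> i l k; have /andP[lo hi] := cube_entry_bounds (w (i, l, k)).
  by rewrite divr_ge0 ?(le_trans (ltW zeta_gt0) lo) ?(ltW b_gt0) //= ler_pdivrMr // mul1r.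
- move=> l j q; case: (((q : nat) == 0%N) && _);
  by rewrite /= ?mulr1 ?mulr0 lexx ?(ltW b_gt0).
- apply: leq_trans (nnz_le_inj (f := fun t : idx r n2 n3 => t.1.2) _) _;
    last by rewrite card_ord.
  have selected (c : bool) : b * c%:R != 0 -> c by case: c; rewrite ?mulr0 ?eqxx.
  move=> [[l j] q] [[l' j'] q']; rewrite !inE /=.
  move=> /selected/andP[/eqP q0 /eqP ->] /selected/andP[/eqP q'0 /eqP ->] /= ->.
  by congr (_, _, _); apply: val_inj; rewrite /= q0 q'0.
Qed.

Lemma cube_fold_row_in_Uset g (g_gt0 : (0 < g)%N) w : (g <= r)%N -> (g * n2 * n3 <= s)%N ->
  Uset n1 n2 n3 r b s zeta (cube_tensor zeta delta (@fold_row n1 n2 n3 g g_gt0) w).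
Proof.
move=> g_le_r g_le_s; split.
  by move=> i j k; case/andP: (cube_entry_bounds (w (fold_row g_gt0 (i, j, k)))).
pose B (l : 'I_r) j q :=
  if (l < g)%N then zeta + delta * (w (ord_mod g_gt0 l, j, q))%:R else 0.
exists (fun i l k => (((k : nat) == 0%N) && (l == widen_ord g_le_r (ord_mod g_gt0 i)))%:R), B.
split; [|split; [|split]].
- rewrite tprod_select_left; apply/funext => i; apply/funext => j; apply/funext => k.
  rewrite /B /= ltn_pmod //; congr (_ + _ * (w (_, _, _))%:R).
  by apply: val_inj; rewrite /= modn_mod.
- by move=> i l k; case: (((k : nat) == 0%N) && _); rewrite /= lexx ler01.
- move=> l j q; rewrite /B; case: ifP => _; last by rewrite lexx ltW.
  have /andP[lo ->] := cube_entry_bounds (w (ord_mod g_gt0 l, j, q)).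
  by rewrite (le_trans (ltW zeta_gt0) lo).
- pose f (t : idx r n2 n3) := (ord_mod g_gt0 t.1.1, t.1.2, t.2).
  apply: leq_trans (nnz_le_inj (f := f) _) _; last by rewrite !card_prod !card_ord.
  move=> [[l j] q] [[l' j'] q']; rewrite !inE /B /=.
  case: ifP => [l_lt _|]; last by rewrite eqxx.
  case: ifP => [l'_lt _|]; last by rewrite eqxx.
  case=> /= l_mod -> ->; congr (_, _, _); apply: val_inj.
  by rewrite /= -(modn_small l_lt) -(modn_small l'_lt).
Qed.

End FoldsInUset.

Lemma fold_col_rate_arith n1 n2 n3 r s : (0 < r)%N -> (r <= n2)%N -> (s <= r * n1 * n3)%N ->
  ((s + r * n1 * n3) * (n2 %/ r).+1 <= 8 * (n1 * n2 * n3))%N.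
Proof.
move=> r_gt0 r_le_n2 s_le; have := leq_divM n2 r; set q := (n2 %/ r)%N => qr_le.
have rq : (r * q.+1 <= 2 * n2)%N by lia.
apply: leq_trans (_ : 2 * (r * n1 * n3) * q.+1 <= _)%N; first by apply: leq_mul => //; lia.
rewrite (_ : 2 * (r * n1 * n3) * q.+1 = 2 * (n1 * n3) * (r * q.+1))%N; last by ring.
nia.
Qed.

Lemma fold_row_rate_arith n1 n2 n3 g s : (0 < g)%N -> (g <= n1)%N ->
  (s < (g.+1) * (n2 * n3))%N -> ((s + s) * (n1 %/ g).+1 <= 8 * (n1 * n2 * n3))%N.
Proof.
move=> g_gt0 g_le_n1 s_lt; have := leq_divM n1 g; set q := (n1 %/ g)%N => qg_le.
have gq : (g * q.+1 <= 2 * n1)%N by lia.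
have s_le : (s + s <= 4 * (g * (n2 * n3)))%N by nia.
apply: leq_trans (_ : 4 * (n2 * n3) * (g * q.+1) <= _)%N; last by nia.
rewrite (_ : 4 * (n2 * n3) * (g * q.+1) = 4 * (g * (n2 * n3)) * q.+1)%N; last by ring.
exact: leq_mul.
Qed.

Lemma minimax_risk_ge_blocks (R : realType) (n1 n2 n3 r : nat) (b : R) (s m : nat)
    (zeta : R) (E : finType) (blk : idx n1 n2 n3 -> E) (L : nat) :
  (0 < n1 * n2 * n3)%N -> (0 < m)%N -> (m <= n1 * n2 * n3)%N -> 0 < zeta -> zeta < b ->
  (0 < L)%N -> (forall e, #|[pred t | blk t == e]| <= L)%N ->
  (forall delta, 0 <= delta -> zeta + delta <= b ->
     forall w, Uset n1 n2 n3 r b s zeta (cube_tensor zeta delta blk w)) ->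
  ((Num.min ((b - zeta) ^+ 2) (zeta * (n1 * n2 * n3)%N%:R / (m%:R * L%:R)) / 8)%:E
     <= minimax_risk n1 n2 n3 r b s m zeta)%E.
Proof.
move=> N_gt0 m_gt0 m_le_N zeta_gt0 zeta_lt_b L_gt0 block_le_L cube_in_U.
set N := (n1 * n2 * n3)%N in N_gt0 m_le_N *.
have N_gt0' : 0 < N%:R :> R by rewrite ltr0n.
have m_gt0' : 0 < m%:R :> R by rewrite ltr0n.
have L_gt0' : 0 < L%:R :> R by rewrite ltr0n.
set d2 := Num.min _ _.
have d2_ge0 : 0 <= d2.
  by rewrite le_min sqr_ge0 /= !mulr_ge0 ?invr_ge0 ?mulr_ge0 // ltW.
(* delta keeps the cube inside [zeta, b] and every block's Poisson signal below zeta. *)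
set delta := Num.sqrt d2.
have delta_sqr : delta ^+ 2 = d2 by rewrite sqr_sqrtr.
have delta_le : delta <= b - zeta.
  rewrite -[b - zeta]ger0_norm ?subr_ge0 ?(ltW zeta_lt_b) // -sqrtr_sqr.
  by apply: ler_wsqrtr; rewrite ge_min lexx.
rewrite -delta_sqr; apply: (minimax_risk_ge_cube (blk := blk)) => //.
- exact: sqrtr_ge0.
- move=> e; rewrite delta_sqr.
  have card_le : #|[pred t | blk t == e]|%:R <= L%:R :> R by rewrite ler_nat.
  have gamma_ge0 : 0 <= m%:R / N%:R :> R by rewrite divr_ge0 // ltW.
  apply: le_trans (_ : L%:R * (m%:R / N%:R) * (zeta * N%:R / (m%:R * L%:R)) <= zeta).
    by rewrite ler_pM // ?mulr_ge0 ?ler_wpM2r // ge_min lexx orbT.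
  rewrite (_ : L%:R * _ * _ = zeta) ?lexx //.
  by field; rewrite !gt_eqF.
- by apply: cube_in_U; [exact: sqrtr_ge0 | lra].
Qed.

Lemma exists_block_rate (R : realType) (n1 n2 n3 r s m : nat) (b zeta : R) :
  (0 < n1)%N -> (0 < n2)%N -> (0 < n3)%N -> 0 < zeta -> zeta < b ->
  (r <= minn n1 n2)%N -> (n2 * n3 < s)%N -> (s <= r * n2 * n3)%N ->
  (0 < m)%N -> (m <= n1 * n2 * n3)%N ->
  exists2 L : nat, (0 < L)%N /\ ((s + r * n1 * n3) * L <= 8 * (n1 * n2 * n3))%N &
    ((Num.min ((b - zeta) ^+ 2) (zeta * (n1 * n2 * n3)%N%:R / (m%:R * L%:R)) / 8)%:E
       <= minimax_risk n1 n2 n3 r b s m zeta)%E.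
Proof.
move=> n1_gt0 n2_gt0 n3_gt0 zeta_gt0 zeta_lt_b; rewrite leq_min => /andP[r_le_n1 r_le_n2].
move=> s_gt s_le m_gt0 m_le_N.
have N_gt0 : (0 < n1 * n2 * n3)%N by rewrite !muln_gt0 n1_gt0 n2_gt0.
have b_gt0 : 0 < b by lra.
have r_gt0 : (0 < r)%N.
  move: s_le; rewrite lt0n; apply: contraTneq => ->.
  by rewrite !mul0n -ltnNge (leq_ltn_trans _ s_gt).
have [s_le_rn1n3|rn1n3_lt_s] := leqP s (r * n1 * n3).
  exists (n2 %/ r).+1; first by split; last exact: fold_col_rate_arith.
  apply: (minimax_risk_ge_blocks (blk := fold_col r_gt0)) => //.
    exact: card_fold_col_fiber.
  move=> delta delta_ge0 zdb w; apply: cube_fold_col_in_Uset => //.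
  by apply: leq_trans (ltnW s_gt); rewrite leq_pmulr.
(* Otherwise fold the first index modulo g, where g (n2 n3) <= s < (g + 1) (n2 n3). *)
set g := (s %/ (n2 * n3))%N.
have n2n3_gt0 : (0 < n2 * n3)%N by rewrite muln_gt0 n2_gt0.
have g_gt0 : (0 < g)%N by rewrite divn_gt0 // ltnW.
have g_le_r : (g <= r)%N by have := leq_div2r (n2 * n3) s_le; rewrite -mulnA mulnK.
have g_le_s : (g * n2 * n3 <= s)%N by rewrite -mulnA leq_divM.
have s_lt : (s < g.+1 * (n2 * n3))%N by rewrite ltn_ceil.
exists (n1 %/ g).+1.
  split=> //; apply: leq_trans (fold_row_rate_arith _ _ s_lt) => //; last lia.
  by rewrite leq_mul2r leq_add2l ltnW.
apply: (minimax_risk_ge_blocks (blk := fold_row g_gt0)) => //.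
  exact: card_fold_row_fiber.
by move=> delta delta_ge0 zdb w; apply: cube_fold_row_in_Uset.
Qed.

Lemma rate_min_le (R : realType) (Delta b zeta D m N L : R) :
  Delta * b ^+ 2 <= (b - zeta) ^+ 2 -> 0 < m -> 0 < L -> 0 < zeta -> D * L <= 8 * N ->
  1 / 16 * Num.min (Delta * b ^+ 2) ((1 / 2) ^+ 2 * zeta * (D / m)) <=
  Num.min ((b - zeta) ^+ 2) (zeta * N / (m * L)) / 8.
Proof.
move=> Delta_le m_gt0 L_gt0 zeta_gt0 DL_le.
have rate_le : (1 / 2) ^+ 2 * zeta * (D / m) <= 2 * (zeta * N / (m * L)).
  rewrite -subr_ge0 (_ : _ - _ = zeta * (8 * N - D * L) / (4 * m * L)); last by field; lra.
  by rewrite !mulr_ge0 ?invr_ge0 ?mulr_ge0 ?subr_ge0 //; lra.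
have := sqr_ge0 (b - zeta).
have := ge_min (Delta * b ^+ 2) (Delta * b ^+ 2) ((1 / 2) ^+ 2 * zeta * (D / m)).
have := ge_min ((1 / 2) ^+ 2 * zeta * (D / m)) (Delta * b ^+ 2) ((1 / 2) ^+ 2 * zeta * (D / m)).
rewrite !lexx orbT /= => min_le_rate min_le_Delta sqr_ge0'.
suff : Num.min (Delta * b ^+ 2) ((1 / 2) ^+ 2 * zeta * (D / m)) / 2 <=
       Num.min ((b - zeta) ^+ 2) (zeta * N / (m * L)) by lra.
by rewrite le_min; apply/andP; split; lra.
Qed.

Theorem proposition6 (R : realType) :
  exists (beta C : R), 0 < beta /\ beta < 1 /\ 0 < C /\
  forall (n1 n2 n3 r s m : nat) (b zeta : R),
  (2 <= n1)%N -> (2 <= n2)%N -> (2 <= n3)%N ->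
  0 < b -> 0 < zeta -> zeta < b ->
  (r <= minn n1 n2)%N ->
  (n2 * n3 < s)%N -> (s <= r * n2 * n3)%N ->
  (1 <= m)%N -> (m <= n1 * n2 * n3)%N ->
  let varsigma := zeta / b in
  let Delta1 := Num.min 1 ((s%:R - (n2 * n3)%N%:R) / (n2 * n3)%N%:R) in
  let Delta := Num.min ((1 - varsigma) ^+ 2) Delta1 in
  (minimax_risk n1 n2 n3 r b s m zeta >=
   (C * Num.min (Delta * b ^+ 2)
      (beta ^+ 2 * zeta * ((s%:R - (n2 * n3)%N%:R + (r * n1 * n3)%N%:R) / m%:R)))%:E)%E.
Proof.
exists (1 / 2), (1 / 16); split; [lra | split; [lra | split; [lra |]]].
move=> n1 n2 n3 r s m b zeta n1_ge2 n2_ge2 n3_ge2 _ zeta_gt0 zeta_lt_b r_le s_gt s_le m_ge1 m_le.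
cbv zeta; set varsigma := zeta / b; set Delta := Num.min ((1 - varsigma) ^+ 2) _.
have [L [L_gt0 L_rate] risk_ge] := exists_block_rate (ltnW n1_ge2) (ltnW n2_ge2) (ltnW n3_ge2)
  zeta_gt0 zeta_lt_b r_le s_gt s_le m_ge1 m_le.
apply: le_trans risk_ge; rewrite lee_fin; apply: rate_min_le; rewrite ?ltr0n //.
- rewrite (_ : (b - zeta) ^+ 2 = (1 - varsigma) ^+ 2 * b ^+ 2); last first.
    by rewrite /varsigma; field; lra.
  by rewrite ler_wpM2r ?sqr_ge0 // ge_min lexx.
- apply: le_trans (_ : (s + r * n1 * n3)%N%:R * L%:R <= _).
    by rewrite ler_wpM2r // natrD lerD2r lerBlDr lerDl.
  by rewrite -natrM -[8]/(8%N%:R) -natrM ler_nat.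
Qed.
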